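(* Let $n\in\mathbb{N}$ and positive integers $a_1\ge a_2\ge\dots\ge a_n$, $b$, $c$ with $c>b>a_n$, and consider the words $u=a_1a_2\cdots a_nb$ and $v=a_1a_2\cdots a_nbc$ (which are column words with segments $a_1\cdots a_n\,|\,b$ and $a_1\cdots a_n\,|\,b\,|\,c$). Let $t=\min\{j: b>a_j\}$ and $b'=a_t$. Then: 1. $u$ is twisted Knuth equivalent to a word $b'a'_1\cdots a'_n$ with $b'<a'_1$ and $a'_1\ge a'_2\ge\dots\ge a'_n$; 2. $v$ is twisted Knuth equivalent to a word $b'c'a''_1a''_2\cdots a''_n$ with $b'<c'<a''_1$ and $a''_1\ge a''_2\ge\dots\ge a''_n$.
   Context: A word is a finite sequence of positive integers. Twisted Knuth equivalence $\sim^*$ is the equivalence relation on words generated by: $u\,b\,a\,c\,v\sim^* u\,b\,c\,a\,v$ whenever $c\le b<a$, and $u\,a\,c\,b\,v\sim^* u\,c\,a\,b\,v$ whenever $c<b\le a$, where $a,b,c$ are positive integers and $u,v$ are arbitrary (possibly empty) words. A column word is a word $a_{11}\cdots a_{1c_1}\,a_{21}\cdots a_{2c_2}\cdots a_{k1}\cdots a_{kc_k}$ with $c_1\ge c_2\ge\dots\ge c_k>0$ such that each segment is weakly decreasing ($a_{ij}\ge a_{i,j+1}$) and $a_{i+1,c_{i+1}-j}>a_{i,c_i-j}$ for all $0\le j<c_{i+1}$, $1\le i<k$. *)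

From mathcomp Require Import all_boot.
From Stdlib Require Import Relations.
Set Implicit Arguments. Unset Strict Implicit. Unset Printing Implicit Defensive.

Definition word := seq nat.

Inductive twk_step : word -> word -> Prop :=
| twk1 (u v : word) (a b c : nat) :
    c <= b -> b < a -> twk_step (u ++ [:: b; a; c] ++ v) (u ++ [:: b; c; a] ++ v)
| twk2 (u v : word) (a b c : nat) :
    c < b -> b <= a -> twk_step (u ++ [:: a; c; b] ++ v) (u ++ [:: c; a; b] ++ v).

Definition twisted_knuth_equiv : word -> word -> Prop :=
  clos_refl_sym_trans word twk_step.

From Stdlib Require Import Relations.
From mathcomp Require Import all_boot.

(* Appending a letter [y] to a weakly decreasing column [w] acts like row
   insertion: [y] replaces the largest entry [x < y] of [w], which is bumped to
   the front.  Two families of moves realise this: [y] first travels left along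
   the tail below [x] (the first move, with [x] as witness), and then [x]
   travels to the front through the entries [>= y] (the second move).  For the
   second statement we insert [c] into the column produced by the first
   insertion; the letter bumped by [c] is at least [b], since [b < c] is an
   entry of that column. *)

Set Implicit Arguments. Unset Strict Implicit.

Local Notation "u ~* v" := (twisted_knuth_equiv u v) (at level 70).

Lemma twisted_knuth_equiv_refl (u : word) : u ~* u.
Proof. exact: rst_refl. Qed.

Lemma twisted_knuth_equiv_sym (u v : word) : u ~* v -> v ~* u.
Proof. exact: rst_sym. Qed.

Lemma twisted_knuth_equiv_trans (u v w : word) : u ~* v -> v ~* w -> u ~* w.
Proof. exact: rst_trans. Qed.

Lemma twk_step_cat (u w x y : word) :
  twk_step x y -> twk_step (u ++ x ++ w) (u ++ y ++ w).
Proof.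
case=> u0 v0 a b c hcb hba.
- by have := twk1 (u ++ u0) (v0 ++ w) hcb hba; rewrite -!catA.
- by have := twk2 (u ++ u0) (v0 ++ w) hcb hba; rewrite -!catA.
Qed.

Lemma twisted_knuth_equiv_cat (u w x y : word) :
  x ~* y -> u ++ x ++ w ~* u ++ y ++ w.
Proof.
elim=> [x0 y0 /(twk_step_cat u w)|x0|x0 y0 _|x0 y0 z0 _ IH1 _ IH2].
- exact: rst_step.
- exact: rst_refl.
- exact: rst_sym.
- exact: twisted_knuth_equiv_trans IH1 IH2.
Qed.

Lemma twisted_knuth_equiv_catl (u x y : word) : x ~* y -> u ++ x ~* u ++ y.
Proof. by move/(twisted_knuth_equiv_cat u [::]); rewrite !cats0. Qed.

Lemma twisted_knuth_equiv_catr (w x y : word) : x ~* y -> x ++ w ~* y ++ w.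
Proof. exact: twisted_knuth_equiv_cat [::] w x y. Qed.

Lemma geq_trans : transitive geq.
Proof. by move=> y x z hyx hzy; apply: leq_trans hzy hyx. Qed.

Lemma large_letter_leftward (x y : nat) (q : word) :
  path geq x q -> x < y -> x :: rcons q y ~* [:: x, y & q].
Proof.
elim: q x => [|z q IH] x /=.
  by move=> _ _; apply: twisted_knuth_equiv_refl.
move=> /andP[hzx hq] hxy.
have hzy : z < y by apply: leq_ltn_trans hzx hxy.
apply: twisted_knuth_equiv_trans
  (twisted_knuth_equiv_catl [:: x] (IH z hq hzy)) _.
by apply/twisted_knuth_equiv_sym/rst_step; apply: (twk1 [::] q hzx hxy).
Qed.

Lemma small_letter_to_front (s y : nat) (p : word) :
  sorted geq (rcons p y) -> s < y -> p ++ [:: s; y] ~* s :: rcons p y.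
Proof.
move=> + hsy; elim: p => [|h p IH] /=.
  by move=> _; apply: twisted_knuth_equiv_refl.
move=> hp; have hpy := path_sorted hp.
apply: twisted_knuth_equiv_trans (twisted_knuth_equiv_catl [:: h] (IH hpy)) _.
have [h' [r def_r]] : exists h' r, rcons p y = h' :: r.
  by case: p {IH hp hpy} => [|h' p]; [exists y, [::] | exists h', (rcons p y)].
move: hp hpy; rewrite def_r /= => /andP[hh'h _] hr.
have hyh' : y <= h'.
  have : y \in h' :: r by rewrite -def_r mem_rcons mem_head.
  by rewrite inE => /predU1P[-> // | /(allP (order_path_min geq_trans hr))].
apply/rst_step; apply: (twk2 [::] r _ hh'h).
exact: leq_trans hsy hyh'.
Qed.

Lemma rcons_bump_equiv (w : word) (y : nat) :
  sorted geq w -> has (fun z => z < y) w ->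
  exists w' : word,
    [/\ size w' = size w, sorted geq w', y \in w', y <= nth 0 w' 0 &
        rcons w y ~* nth 0 w (find (fun z => z < y) w) :: w'].
Proof.
move=> hw hy; case: (split_find_nth 0 hy) hw => x s1 s2 hxy /hasPn hs1.
rewrite cat_rcons sorted_cat_cons => /andP[hs1x hxs2].
have hs1y : sorted geq (rcons s1 y).
  move: hs1x; rewrite !(sorted_pairwise geq_trans) !pairwise_rcons.
  move=> /andP[_ ->].
  by rewrite andbT; apply/allP => z /hs1 /=; rewrite -leqNgt.
exists (s1 ++ y :: s2); split.
- by rewrite !size_cat.
- by rewrite sorted_cat_cons hs1y (path_le geq_trans (ltnW hxy) hxs2).
- by rewrite mem_cat mem_head orbT.
- by case: s1 {hs1x hs1y} hs1 => [|z s1] //= hs1; rewrite leqNgt hs1 ?mem_head.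
- rewrite rcons_cat /=.
  apply: twisted_knuth_equiv_trans
    (twisted_knuth_equiv_catl s1 (large_letter_leftward hxs2 hxy)) _.
  have := twisted_knuth_equiv_catr s2 (small_letter_to_front hs1y hxy).
  by rewrite -catA /= cat_rcons.
Qed.

Lemma bumped_letter_max (w : word) (y z : nat) :
  sorted geq w -> z \in w -> z < y -> z <= nth 0 w (find (fun z => z < y) w).
Proof.
move=> hw hzw hzy; have hy : has (fun z => z < y) w by apply/hasP; exists z.
case: (split_find_nth 0 hy) hw hzw => x s1 s2 _ /hasPn hs1.
rewrite cat_rcons sorted_cat_cons mem_cat inE => /andP[_ hxs2].
case/or3P => [/hs1 | /eqP -> // | ]; first by rewrite hzy.
exact: allP (order_path_min geq_trans hxs2) z.
Qed.

Unset Implicit Arguments.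

Theorem lemma4p2 (n : nat) (a : seq nat) (b c : nat) :
  size a = n ->
  all (fun x => 0 < x) a -> 0 < b -> 0 < c ->
  sorted geq a ->
  last b a < b -> b < c -> 0 < n ->
  let t := find (fun x => x < b) a in
  let b' := nth 0 a t in
  (exists a' : seq nat,
      [/\ size a' = n, b' < nth 0 a' 0, sorted geq a' &
        twisted_knuth_equiv (rcons a b) (b' :: a')]) /\
  (exists (c' : nat) (a'' : seq nat),
      [/\ size a'' = n, b' < c', c' < nth 0 a'' 0, sorted geq a'' &
        twisted_knuth_equiv (rcons (rcons a b) c) (b' :: c' :: a'')]).
Proof.
move=> size_a _ _ _ sorted_a last_lt_b b_lt_c n_gt0.
have has_a : has (fun x => x < b) a.
  case: a size_a n_gt0 last_lt_b {sorted_a} => [<- // | h r _ _ lt_b].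
  by apply/hasP; exists (last h r); rewrite ?mem_last.
move=> t b'; have b'_lt_b : b' < b := nth_find 0 has_a.
have [a' [size_a' sorted_a' b_in_a' b_le_a' equiv_a']] :=
  rcons_bump_equiv sorted_a has_a.
have has_a' : has (fun x => x < c) a' by apply/hasP; exists b.
have [a'' [size_a'' sorted_a'' _ c_le_a'' equiv_a'']] :=
  rcons_bump_equiv sorted_a' has_a'.
split; first by exists a'; rewrite size_a' size_a (leq_trans b'_lt_b b_le_a').
exists (nth 0 a' (find (fun x => x < c) a')), a''; split.
- by rewrite size_a'' size_a' size_a.
- exact: leq_trans b'_lt_b (bumped_letter_max sorted_a' b_in_a' b_lt_c).
- exact: leq_trans (nth_find 0 has_a') c_le_a''.
- exact: sorted_a''.
- rewrite -[rcons _ c]cats1.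
  apply: twisted_knuth_equiv_trans
    (twisted_knuth_equiv_catr [:: c] equiv_a') _.
  by rewrite cats1; apply: (twisted_knuth_equiv_catl [:: b'] equiv_a'').
Qed.
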